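(* Let $k\ge1$ and $c\in\mathcal{S}_k^\alpha\setminus\{\mathbf{0}\}$. Then $w_H(c)=q^{sk}-q^{\nu(c)+s(k-1)}$.
   Context: Let $R$ be a finite commutative chain ring with maximal ideal $\langle\gamma\rangle$, nilpotency index $s$ and residue field $R/\langle\gamma\rangle\cong\mathbb{F}_q$. Fix coset representatives $T=\{e_0,\dots,e_{q-1}\}$ with $e_0=0,e_1=1$, ordered $e_0<\dots<e_{q-1}$; each $r\in R$ is uniquely $\sum_{i=0}^{s-1}r_i\gamma^i$, $r_i\in T$; order $R$ by $x>y$ iff $x_i>y_i$ in $T$ for the largest $i$ with $x_i\neq y_i$; list $R=\{\rho_0,\dots,\rho_{q^s-1}\}$ increasingly. $\mathbf{a}^{(m)}$ is the constant vector of length $m$. Define $G_1^\alpha=(\rho_0\ \cdots\ \rho_{q^s-1})$ and, for $k>1$, $G_k^\alpha$ as the $k\times q^{sk}$ matrix of $q^s$ column blocks, the $j$-th having first row $\boldsymbol{\rho_j}^{(q^{s(k-1)})}$ and $G_{k-1}^\alpha$ below. $\mathcal{S}_k^\alpha$ is the $R$-submodule of $R^{q^{sk}}$ generated by the rows of $G_k^\alpha$. $w_H$ is the Hamming weight (number of nonzero coordinates). Valuation: for $x\in R\setminus\{0\}$, $\nu(x)$ is the largest $m$ with $x=\gamma^m\beta$, $\beta$ a unit; $\nu(0)=\infty$; for $x\in R^n$, $\nu(x)=\min_i\nu(x_i)$. *)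

From HB Require Import structures.
From mathcomp Require Import all_boot all_order all_algebra.
Set Implicit Arguments. Unset Strict Implicit. Unset Printing Implicit Defensive.
Import Order.TTheory GRing.Theory Num.Theory.
Local Open Scope ring_scope.

Section ChainCode.
Variable R : finComUnitRingType.
Variable gamma : R.
Variable s : nat.
Variable T : seq R.   (* coset representatives e_0 < e_1 < ... < e_{q-1} (order = list order) *)

(* q = |R / <gamma>| *)
Definition qT : nat := size T.

(* Finite commutative chain ring with maximal ideal <gamma>, nilpotency index s:
   the non-units are exactly the multiples of gamma (R is local with maximal
   ideal <gamma>), gamma^s = 0 and gamma^(s-1) <> 0. *)
Definition chain_ring_data : Prop :=
  [/\ forall x : R, x \notin GRing.unit <-> exists y, x = gamma * y,
      gamma ^+ s = 0 & gamma ^+ s.-1 != 0].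

Definition coset_reps : Prop :=
  [/\ forall x : R, exists! i : 'I_qT, exists y, x - T`_i = gamma * y,
      T`_0 = 0 & T`_1 = 1].

(* rho_j : the j-th element of R in the increasing order described in the
   paper: the order is lexicographic on the gamma-adic digits read from the
   most significant one, digits compared by their index in T; hence
   rho_j = sum_i e_{d_i(j)} gamma^i where d_i(j) is the i-th base-q digit of j. *)
Definition rho (j : nat) : R :=
  \sum_(i < s) T`_((j %/ qT ^ i) %% qT) * gamma ^+ i.

(* Entry (i, m) of the generator matrix G_k^alpha (rows/cols indexed from 0):
   G_1 = (rho_0 ... rho_{q^s-1}); G_{k+1} has q^s column blocks of width
   q^{sk}, block j has first row rho_j and G_k below. *)
Fixpoint Gentry (k i m : nat) : R :=
  match k with
  | 0 => 0
  | k'.+1 => if i is i'.+1 then Gentry k' i' (m %% qT ^ (s * k'))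
             else rho (m %/ qT ^ (s * k'))
  end.

Definition Gmx (k : nat) : 'M[R]_(k, qT ^ (s * k)) :=
  \matrix_(i < k, m < qT ^ (s * k)) Gentry k i m.

Definition in_Sk (k : nat) (c : 'rV[R]_(qT ^ (s * k))) : Prop :=
  exists a : 'rV[R]_k, c = a *m Gmx k.

End ChainCode.

Definition wH (R : finComUnitRingType) (n : nat) (c : 'rV[R]_n) : nat :=
  #|[set m : 'I_n | c 0 m != 0]|.

(* valuation of a nonzero x: the largest m with x = gamma^m * beta, beta a unit
   (for x <> 0 such m is < s since gamma^s = 0). *)
Definition nu_elt (R : finComUnitRingType) (gamma : R) (s : nat) (x : R) : nat :=
  \max_(m < s | [exists b : R, (b \is a GRing.unit) && (x == gamma ^+ m * b)]) m.

(* valuation of a vector: minimum over its nonzero coordinates (the value s,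
   standing for infinity, is only reached for the zero vector). *)
Definition nu_vec (R : finComUnitRingType) (gamma : R) (s n : nat)
  (c : 'rV[R]_n) : nat :=
  \big[minn/s]_(m < n | c 0 m != 0) nu_elt gamma s (c 0 m).

Arguments qT {R} T.
Arguments chain_ring_data {R} gamma s.
Arguments coset_reps {R} gamma T.
Arguments rho {R} gamma s T j.
Arguments Gentry {R} gamma s T k i m.
Arguments Gmx {R} gamma s T k.
Arguments in_Sk {R} gamma s T k c.
Arguments wH {R n} c.
Arguments nu_elt {R} gamma s x.
Arguments nu_vec {R} gamma s {n} c.

(* The columns of G_k^alpha run through R^k, each exactly once, so the codeword
   c = a G_k lists the values of the linear form x |-> a.x on all of R^k and
   w_H(c) counts the x with a.x <> 0.  Factor a = gamma^v b, where v is the least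
   valuation of a coordinate of a (this v is also nu(c)) and b has a unit
   coordinate b_i0; the substitution y_i0 = b.x, invertible because b_i0 is a
   unit, turns the kernel of the form into {y | gamma^v y_i0 = 0}, of size
   |Ann(gamma^v)| |R|^(k-1) = q^v q^(s(k-1)).  Both |R| = q^s and
   |Ann(gamma^v)| = q^v come from the existence and uniqueness of gamma-adic
   expansions with digits in T. *)

From mathcomp Require Import all_boot all_order all_algebra zify.
Set Implicit Arguments. Unset Strict Implicit. Unset Printing Implicit Defensive.
Import Order.TTheory GRing.Theory.
Local Open Scope ring_scope.

Lemma card_family_set (aT rT : finType) (F : aT -> pred rT) :
  #|[set f : {ffun aT -> rT} | [forall x, f x \in F x]]| = (\prod_x #|F x|)%N.
Proof.
have -> : #|[set f : {ffun aT -> rT} | [forall x, f x \in F x]]| = #|family F|.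
  by apply: eq_card => f; rewrite inE; apply/forallP/familyP.
by rewrite card_family foldrE big_map big_enum.
Qed.

Lemma card_linear_form_eq0 (R : finComUnitRingType) k (c : R) (b : 'I_k -> R) i0 :
  b i0 \is a GRing.unit ->
  #|[set x : {ffun 'I_k -> R} | c * \sum_i b i * x i == 0]| =
  (#|[set z : R | (c * z == 0)%R]| * #|R| ^ k.-1)%N.
Proof.
move=> b_unit.
pose psi (x : {ffun 'I_k -> R}) := [ffun i => if i == i0 then \sum_j b j * x j else x i].
have psi_inj : injective psi.
  move=> x y /ffunP psi_xy; apply/ffunP => i.
  have off_i0 j : j != i0 -> x j = y j.
    by move=> ne_j; have := psi_xy j; rewrite !ffunE (negPf ne_j).
  have [->|/off_i0 //] := eqVneq i i0.
  have := psi_xy i0; rewrite !ffunE eqxx (bigD1 i0) // [X in _ = X](bigD1 i0) //=.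
  rewrite (eq_bigr (fun j => b j * y j)) => [/addIr /(mulrI b_unit) //|j /off_i0 -> //].
pose A := [set y : {ffun 'I_k -> R} |
  [forall i, y i \in if i == i0 then [pred z | c * z == 0] else predT]].
have -> : [set x : {ffun _ -> R} | c * \sum_i b i * x i == 0] = psi @^-1: A.
  apply/setP => x; rewrite !inE; apply/idP/forallP => [ker_x i|/(_ i0)].
    by rewrite ffunE; case: eqP => // ->; rewrite inE eqxx.
  by rewrite !ffunE eqxx.
rewrite card_preimset // card_family_set (bigD1 i0) //= eqxx.
congr (_ * _)%N; first by apply: eq_card => z; rewrite !inE.
rewrite (eq_bigr (fun _ => #|R|)) => [|i /negPf -> //].
by rewrite prod_nat_const cardC1 card_ord.
Qed.

Lemma surj_card_bij (T T' : finType) (f : T -> T') :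
  (forall y, exists x, f x = y) -> (#|T| <= #|T'|)%N -> bijective f.
Proof.
move=> f_surj le_card; have [g gK] : exists g, cancel g f := fin_all_exists f_surj.
exact: (bij_can_bij (inj_card_bij (can_inj gK) le_card) gK).
Qed.

Lemma bigminn_attained (I : finType) (P : pred I) (F : I -> nat) x0 i0 :
  P i0 -> (F i0 <= x0)%N -> (forall i, P i -> F i0 <= F i)%N ->
  \big[minn/x0]_(i | P i) F i = F i0.
Proof.
move=> Pi0 le_x0 le_F; apply/eqP.
rewrite eqn_leq -Order.NatOrder.minEnat -!Order.NatOrder.leEnat.
by apply/andP; split; [exact: bigmin_le_cond | exact/bigmin_geP].
Qed.

Section ChainRing.
Variables (R : finComUnitRingType) (gamma : R) (s : nat).
Hypothesis chainR : chain_ring_data gamma s.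

Lemma nonunit_gammaP x : x \notin GRing.unit <-> exists y, x = gamma * y.
Proof. by case: chainR. Qed.

Lemma gammaX_eq0 n : (s <= n)%N -> gamma ^+ n = 0.
Proof. by case: chainR => _ gs _ /subnK <-; rewrite exprD gs mulr0. Qed.

Lemma gammaX_neq0 n : (n < s)%N -> gamma ^+ n != 0.
Proof.
case: chainR => _ _ gs1 lt_ns; apply: contraNneq gs1 => gn.
by rewrite -(subnK (_ : n <= s.-1)%N) ?exprD ?gn ?mulr0 //; lia.
Qed.

Lemma unitrD_gammaM u y : u \is a GRing.unit -> u + gamma * y \is a GRing.unit.
Proof.
move=> u_unit; apply/negP => /negP /nonunit_gammaP [z uyE].
have /negP[] : u \notin GRing.unit.
  by apply/nonunit_gammaP; exists (z - y); rewrite mulrBr -uyE addrK.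
exact: u_unit.
Qed.

Lemma gammaXM_unit_eq0 r u : u \is a GRing.unit -> gamma ^+ r * u = 0 -> (s <= r)%N.
Proof.
move=> u_unit /eqP; rewrite -(mul0r u) (inj_eq (mulIr u_unit)).
by apply: contraTT; rewrite -ltnNge; exact: gammaX_neq0.
Qed.

Lemma gamma_adic_eq0 N (t : 'I_N -> R) r :
  (forall i, t i = 0 \/ t i \is a GRing.unit) ->
  gamma ^+ r * (\sum_(i < N) t i * gamma ^+ i) = 0 ->
  forall i : 'I_N, (i + r < s)%N -> t i = 0.
Proof.
elim: N t r => [|N IH] t r t_digit sum_eq0 i; first by case: i.
pose S := \sum_(j < N) t (lift ord0 j) * gamma ^+ j.
have {}sum_eq0 : gamma ^+ r * (t ord0 + gamma * S) = 0.
  rewrite -sum_eq0 big_ord_recl expr0 mulr1 mulr_sumr.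
  by congr (_ * (_ + _)); apply: eq_bigr => j _; rewrite lift0 exprS mulrCA.
have t0_eq0 : (r < s)%N -> t ord0 = 0.
  move=> lt_rs; case: (t_digit ord0) => // /(unitrD_gammaM S) /gammaXM_unit_eq0.
  by move=> /(_ r sum_eq0); lia.
case: (unliftP ord0 i) => [j ->|->] lt_is; last by apply: t0_eq0; lia.
rewrite lift0 in lt_is.
apply: (IH (t \o lift ord0) r.+1) => [l||]; first exact: t_digit; last by lia.
by rewrite exprSr -mulrA -[RHS]sum_eq0 t0_eq0 ?add0r //; lia.
Qed.

Lemma valuation_exists x : x != 0 ->
  exists m u, [/\ (m < s)%N, u \is a GRing.unit & x = gamma ^+ m * u].
Proof.
move=> x_neq0.
have gammaX_dvd n : (exists m u, [/\ (m < n)%N, u \is a GRing.unit & x = gamma ^+ m * u])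
    \/ exists y, x = gamma ^+ n * y.
  elim: n => [|n [[m [u [lt_mn u_unit xE]]]|[y xE]]].
  - by right; exists x; rewrite mul1r.
  - by left; exists m, u; split => //; lia.
  - case: (boolP (y \is a GRing.unit)) => [y_unit|/nonunit_gammaP [z yE]].
      by left; exists n, y.
    by right; exists z; rewrite xE yE exprSr mulrA.
case: (gammaX_dvd s) => [//|[y xE]].
by move: x_neq0; rewrite xE gammaX_eq0 // mul0r eqxx.
Qed.

Lemma valuation_unique m n u w : (m < s)%N -> (n < s)%N ->
  u \is a GRing.unit -> w \is a GRing.unit -> gamma ^+ m * u = gamma ^+ n * w -> m = n.
Proof.
wlog lt_mn : m n u w / (m < n)%N.
  move=> wlog_lt lt_ms lt_ns u_unit w_unit eq_mn.
  case: (ltngtP m n) => [lt_mn|lt_nm|//]; first exact: (wlog_lt m n u w).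
  by apply/esym/(wlog_lt n m w u).
move=> lt_ms _ u_unit _ eq_mn.
have diff_unit : u - gamma ^+ (n - m) * w \is a GRing.unit.
  by rewrite -(subnSK lt_mn) exprS -mulrA -mulrN; exact: unitrD_gammaM.
have := @gammaXM_unit_eq0 m _ diff_unit.
rewrite mulrBr mulrA -exprD subnKC ?eq_mn ?subrr; [by move/(_ erefl); lia | exact: ltnW].
Qed.

Lemma nu_eltE m u : (m < s)%N -> u \is a GRing.unit ->
  nu_elt gamma s (gamma ^+ m * u) = m.
Proof.
move=> lt_ms u_unit; apply/eqP; rewrite eqn_leq; apply/andP; split.
  apply/bigmax_leqP => i /existsP [w /andP [w_unit /eqP eq_mi]].
  by rewrite (valuation_unique lt_ms (ltn_ord i) u_unit w_unit eq_mi).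
apply: (@leq_bigmax_cond _ _ _ (Ordinal lt_ms)).
by apply/existsP; exists u; rewrite u_unit eqxx.
Qed.

Lemma nu_elt_gammaXM v y :
  gamma ^+ v * y != 0 -> (v <= nu_elt gamma s (gamma ^+ v * y)%R)%N.
Proof.
have [->|/valuation_exists [m [u [_ u_unit ->]]]] := eqVneq y 0; first by rewrite mulr0 eqxx.
rewrite mulrA -exprD => neq0.
have lt_vm_s : (v + m < s)%N.
  by rewrite ltnNge; apply: contraNN neq0 => /gammaX_eq0 ->; rewrite mul0r.
by rewrite nu_eltE // leq_addr.
Qed.

Lemma gammaX_factor_unit k (a : 'I_k -> R) : (exists i, a i != 0) ->
  exists v (b : 'I_k -> R) i0,
    [/\ (v < s)%N, b i0 \is a GRing.unit & forall i, a i = gamma ^+ v * b i].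
Proof.
move=> [i1 a_i1].
case: (@arg_minnP _ i1 (fun i => a i != 0) (fun i => nu_elt gamma s (a i)) a_i1).
move=> i0 a_i0 nu_min.
have [v [u [lt_vs u_unit a_i0E]]] := valuation_exists a_i0.
have b_ex i : exists y, a i = gamma ^+ v * y /\ (i == i0 -> y \is a GRing.unit).
  case: (eqVneq i i0) => [->|ne_i]; first by exists u.
  have [->|a_i] := eqVneq (a i) 0; first by exists 0; rewrite mulr0.
  have [m [w [lt_ms w_unit a_iE]]] := valuation_exists a_i.
  have := nu_min i a_i; rewrite a_i0E a_iE !nu_eltE // => le_vm.
  by exists (gamma ^+ (m - v) * w); rewrite mulrA -exprD subnKC.
have [b bP] := fin_all_exists b_ex.
exists v, b, i0; split=> // [|i]; last by case: (bP i).
by case: (bP i0) => _ /(_ (eqxx _)).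
Qed.

End ChainRing.

Lemma digit_add_mulX_lt b j d n i : (0 < b)%N -> (i < n)%N ->
  ((j + d * b ^ n) %/ b ^ i %% b = j %/ b ^ i %% b)%N.
Proof.
move=> b_gt0 lt_in.
rewrite -(subnKC (ltnW lt_in)) expnD mulnCA mulnC divnDMl ?expn_gt0 ?b_gt0 //.
by rewrite -(subnSK lt_in) expnS mulnCA mulnC addnC modnMDl.
Qed.

Lemma digit_add_mulX_eq b j d n : (0 < b)%N -> (j < b ^ n)%N -> (d < b)%N ->
  ((j + d * b ^ n) %/ b ^ n %% b = d)%N.
Proof.
by move=> b_gt0 lt_j lt_d; rewrite divnDMl ?expn_gt0 ?b_gt0 // divn_small // modn_small.
Qed.

Section GammaAdicDigits.
Variables (R : finComUnitRingType) (gamma : R) (s : nat) (T : seq R).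
Hypotheses (chainR : chain_ring_data gamma s) (cosetT : coset_reps gamma T).
Local Notation q := (qT T).

Lemma coset_reps_eq i j : (i < q)%N -> (j < q)%N ->
  (exists y, T`_i - T`_j = gamma * y) -> i = j.
Proof.
move=> lt_iq lt_jq [y Tij]; case: cosetT => uniq_rep _ _.
have [r [_ r_uniq]] := uniq_rep T`_i.
have -> : i = Ordinal lt_iq by [].
have -> : j = Ordinal lt_jq by [].
congr nat_of_ord; transitivity r; [symmetry|]; apply: r_uniq; last by exists y.
by exists 0; rewrite subrr mulr0.
Qed.

Lemma coset_reps_subr_unit i j : (i < q)%N -> (j < q)%N -> i <> j ->
  T`_i - T`_j \is a GRing.unit.
Proof.
move=> lt_iq lt_jq ne_ij; apply/negPn/negP => /(nonunit_gammaP chainR).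
by move/(coset_reps_eq lt_iq lt_jq).
Qed.

Lemma coset_reps0 : T`_0 = 0.
Proof. by case: cosetT. Qed.

Lemma qT_gt1 : (1 < q)%N.
Proof.
by case: cosetT => _ _; rewrite /qT; case: T => [|x [|y l]] //= /eqP; rewrite eq_sym oner_eq0.
Qed.

Lemma coset_rep_eq0_or_unit i : (i < q)%N -> T`_i = 0 \/ T`_i \is a GRing.unit.
Proof.
case: i => [|i] lt_iq; first by left; exact: coset_reps0.
right; have := @coset_reps_subr_unit i.+1 0 lt_iq (ltnW qT_gt1).
by rewrite coset_reps0 subr0; apply.
Qed.

Definition rho_trunc n j := \sum_(i < n) T`_(j %/ q ^ i %% q) * gamma ^+ i.

Lemma rho_trunc_approx n x :
  exists2 j, (j < q ^ n)%N & exists y, x - rho_trunc n j = gamma ^+ n * y.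
Proof.
have q_gt0 : (0 < q)%N by exact: ltnW qT_gt1.
elim: n => [|n [j lt_j [y xE]]].
  by exists 0%N; [rewrite expn0 | exists x; rewrite /rho_trunc big_ord0 subr0 mul1r].
case: cosetT => uniq_rep _ _; have [[d lt_dq] [[z yE] _]] := uniq_rep y.
exists (j + d * q ^ n)%N; first by rewrite expnS; nia.
exists z; rewrite /rho_trunc big_ord_recr /= digit_add_mulX_eq //.
rewrite (eq_bigr (fun i : 'I_n => T`_(j %/ q ^ i %% q) * gamma ^+ i)) => [|i _]; last first.
  by rewrite digit_add_mulX_lt.
by rewrite opprD addrA xE exprSr -mulrA -yE mulrBr [T`_d * _]mulrC.
Qed.

Lemma rho_surj x : exists2 j, (j < q ^ s)%N & rho gamma s T j = x.
Proof.
have [j lt_j [y xE]] := rho_trunc_approx s x; exists j => //.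
by apply/eqP; rewrite eq_sym -subr_eq0 [rho _ _ _ _]/= xE (gammaX_eq0 chainR) ?mul0r.
Qed.

Definition expansion (d : {ffun 'I_s -> 'I_q}) : R := \sum_(i < s) T`_(d i) * gamma ^+ i.

Lemma expansion_inj : injective expansion.
Proof.
move=> d e de; apply/ffunP => i; apply/val_inj/(coset_reps_eq (ltn_ord _) (ltn_ord _)).
exists 0; rewrite mulr0.
apply: (gamma_adic_eq0 chainR (t := fun j => T`_(d j) - T`_(e j)) (r := 0)) => [j||];
  last by rewrite addn0.
  case: (eqVneq (d j) (e j)) => [->|ne_j]; first by left; exact: subrr.
  by right; apply: coset_reps_subr_unit => // /val_inj /eqP; rewrite (negPf ne_j).
rewrite mul1r; under eq_bigr do rewrite mulrBl.
by rewrite sumrB -[X in X - _]/(expansion d) de subrr.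
Qed.

Lemma card_chain_ring : #|R| = (q ^ s)%N.
Proof.
have rho_ord x : exists j : 'I_(q ^ s), rho gamma s T j = x.
  by have [j lt_j <-] := rho_surj x; exists (Ordinal lt_j).
have [g gK] : exists g, cancel g (fun j : 'I_(q ^ s) => rho gamma s T j) :=
  fin_all_exists rho_ord.
apply/eqP; rewrite eqn_leq; apply/andP; split.
  by have := leq_card g (can_inj gK); rewrite card_ord.
by have := leq_card _ expansion_inj; rewrite card_ffun !card_ord.
Qed.

Lemma expansion_bij : bijective expansion.
Proof.
by apply: inj_card_bij expansion_inj _; rewrite card_chain_ring card_ffun !card_ord.
Qed.

Lemma gammaX_expansion_eq0 d v : (v <= s)%N ->
  (gamma ^+ v * expansion d == 0) = [forall i : 'I_s, (i < s - v)%N ==> (d i == 0 :> nat)].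
Proof.
move=> le_vs; apply/eqP/forallP => [ann_d i|low_d0].
  apply/implyP => lt_i; apply/eqP/(coset_reps_eq (ltn_ord _) (ltnW qT_gt1)).
  exists 0; rewrite coset_reps0 subr0 mulr0.
  have digit_d j : T`_(d j) = 0 \/ T`_(d j) \is a GRing.unit.
    exact: coset_rep_eq0_or_unit.
  by apply: (gamma_adic_eq0 chainR digit_d ann_d); lia.
rewrite /expansion mulr_sumr big1 // => i _.
case: (ltnP i (s - v)) => [lt_i|le_i].
  by move/implyP/(_ lt_i)/eqP: (low_d0 i) => ->; rewrite coset_reps0 mul0r mulr0.
by rewrite mulrCA -exprD (gammaX_eq0 chainR) ?mulr0 //; lia.
Qed.

Lemma card_annihilator v : (v <= s)%N -> #|[set z : R | gamma ^+ v * z == 0]| = (q ^ v)%N.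
Proof.
move=> le_vs; rewrite -(on_card_preimset (onW_bij _ expansion_bij)).
pose low_digit (i : 'I_s) : pred 'I_q :=
  if (i < s - v)%N then [pred x : 'I_q | x == 0 :> nat] else predT.
have -> : #|expansion @^-1: [set z | gamma ^+ v * z == 0]| =
    #|[set d : {ffun 'I_s -> 'I_q} | [forall i, d i \in low_digit i]]|.
  apply: eq_card => d; rewrite !inE gammaX_expansion_eq0 //.
  by apply: eq_forallb => i; rewrite /low_digit; case: ifP.
have card_zero : #|[pred x : 'I_q | x == 0 :> nat]| = 1%N.
  by rewrite -(card1 (Ordinal (ltnW qT_gt1))); apply: eq_card => x; rewrite !inE.
rewrite card_family_set.
rewrite (eq_bigr (fun i : 'I_s => if (i < s - v)%N then 1%N else q)); last first.
  by move=> i _; rewrite /low_digit; case: ifP; rewrite ?card_zero ?card_ord.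
rewrite -(big_mkord xpredT (fun i => if (i < s - v)%N then 1%N else q)).
rewrite (big_cat_nat _ (leq_subr v s)) //= big_nat_cond big1 => [|i /andP [/andP [_ ->]]] //.
rewrite mul1n big_nat_cond (eq_bigr (fun=> q)) => [|i /andP [/andP [le_i _] _]]; last first.
  by rewrite ltnNge le_i.
by rewrite -big_nat_cond prod_nat_const_nat subKn.
Qed.

End GammaAdicDigits.

Section GeneratorMatrix.
Variables (R : finComUnitRingType) (gamma : R) (s : nat) (T : seq R).
Hypotheses (chainR : chain_ring_data gamma s) (cosetT : coset_reps gamma T).
Local Notation q := (qT T).

Lemma Gentry_surj k (x : 'I_k -> R) :
  exists2 m, (m < q ^ (s * k))%N & forall i : 'I_k, Gentry gamma s T k i m = x i.
Proof.
elim: k x => [|k IH] x; first by exists 0%N; [rewrite muln0 | case].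
have [m lt_m Gm] := IH (x \o lift ord0).
have [j lt_j rho_j] := rho_surj chainR cosetT (x ord0).
have q_gt0 : (0 < q ^ (s * k))%N by rewrite expn_gt0 (ltnW (qT_gt1 cosetT)).
exists (j * q ^ (s * k) + m)%N; first by rewrite mulnS expnD; nia.
move=> i; case: (unliftP ord0 i) => [i' ->|->] /=.
  by rewrite add0n modnMDl modn_small // Gm.
by rewrite divnMDl // divn_small // addn0 rho_j.
Qed.

Definition Gcol k (m : 'I_(q ^ (s * k))) : {ffun 'I_k -> R} :=
  [ffun i : 'I_k => Gentry gamma s T k i m].

Lemma Gcol_bij k : bijective (@Gcol k).
Proof.
apply: surj_card_bij => [x|]; last first.
  by rewrite card_ffun (card_chain_ring chainR cosetT) !card_ord expnM.
have [m lt_m Gm] := Gentry_surj x.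
by exists (Ordinal lt_m); apply/ffunP => i; rewrite ffunE Gm.
Qed.

Lemma mulmx_GmxE k (a : 'rV[R]_k) m :
  (a *m Gmx gamma s T k) 0 m = \sum_i a 0 i * Gcol m i.
Proof. by rewrite !mxE; apply: eq_bigr => i _; rewrite mxE ffunE. Qed.

Lemma wH_mulmx_Gmx k (a : 'rV[R]_k) :
  wH (a *m Gmx gamma s T k) = #|[set x : {ffun 'I_k -> R} | \sum_i a 0 i * x i != 0]|.
Proof.
rewrite /wH -(on_card_preimset (onW_bij _ (Gcol_bij k))).
by apply: eq_card => m; rewrite !inE mulmx_GmxE.
Qed.

Lemma nu_vec_mulmx_Gmx k (a : 'rV[R]_k) v (b : 'I_k -> R) i0 :
  (v < s)%N -> b i0 \is a GRing.unit -> (forall i, a 0 i = gamma ^+ v * b i) ->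
  nu_vec gamma s (a *m Gmx gamma s T k) = v.
Proof.
move=> lt_vs b_unit aE; have [col_inv GcolK colK] := Gcol_bij k.
pose m0 := col_inv [ffun i => (i == i0)%:R].
have c_m0 : (a *m Gmx gamma s T k) 0 m0 = gamma ^+ v * b i0.
  rewrite mulmx_GmxE colK (bigD1 i0) //= ffunE eqxx mulr1 big1 ?addr0 ?aE // => i.
  by move=> /negPf ne_i; rewrite ffunE ne_i mulr0.
rewrite /nu_vec (@bigminn_attained _ _ _ _ m0) c_m0 ?nu_eltE //.
- by apply/eqP => /(gammaXM_unit_eq0 chainR b_unit); rewrite leqNgt lt_vs.
- exact: ltnW.
move=> m; rewrite mulmx_GmxE; under eq_bigr do rewrite aE -mulrA.
by rewrite -mulr_sumr; exact: nu_elt_gammaXM.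
Qed.

End GeneratorMatrix.

Theorem corollary3p10 (R : finComUnitRingType) (gamma : R) (s : nat) (T : seq R)
  (k : nat) (c : 'rV[R]_(qT T ^ (s * k))) :
  chain_ring_data gamma s -> coset_reps gamma T -> (1 <= k)%N ->
  in_Sk gamma s T k c -> c != 0 ->
  wH c = (qT T ^ (s * k) - qT T ^ (nu_vec gamma s c + s * (k - 1)))%N.
Proof.
move=> chainR cosetT _ [a ->] c_neq0.
have [i a_i] : exists i, a 0 i != 0.
  apply/existsP; apply: contraNT c_neq0 => /existsPn a0.
  by apply/eqP; rewrite (_ : a = 0) ?mul0mx //; apply/rowP => i; rewrite mxE; exact/eqP/negPn.
have [v [b [i0 [lt_vs b_unit aE]]]] := gammaX_factor_unit chainR (ex_intro _ i a_i).
rewrite (nu_vec_mulmx_Gmx chainR cosetT lt_vs b_unit aE) (wH_mulmx_Gmx chainR cosetT).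
have -> : [set x : {ffun 'I_k -> R} | \sum_i a 0 i * x i != 0] =
    ~: [set x : {ffun 'I_k -> R} | gamma ^+ v * \sum_i b i * x i == 0].
  by apply/setP => x; rewrite !inE mulr_sumr; under eq_bigr do rewrite aE -mulrA.
rewrite cardsCs setCK (card_linear_form_eq0 _ b_unit).
rewrite (card_annihilator chainR cosetT (ltnW lt_vs)).
rewrite card_ffun card_ord (card_chain_ring chainR cosetT) -!expnM -expnD.
by rewrite -subn1 mulnC [(s * _)%N]mulnC.
Qed.
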